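(* Let $\langle H,\epsilon\rangle$ be a copointed functor on $\mathcal C$ and $\lambda\colon TH\Rightarrow HT$ a distributive law of $\mathcal T$ over $\langle H,\epsilon\rangle$. (a) The following are equivalent: 1. $Hq_X\circ\lambda_X\circ l_{HX}=Hq_X\circ\lambda_X\circ r_{HX}$ for all $X$ ($\lambda$ preserves $\mathcal E$). 2. There is a distributive law $\lambda'\colon T'H\Rightarrow HT'$ of $\mathcal T'$ over the copointed functor $\langle H,\epsilon\rangle$ such that $q$ is a morphism of distributive laws from $\lambda$ to $\lambda'$; this $\lambda'$ is then unique. (b) If $\lambda$ preserves $\mathcal E$ and $\mathcal K$ is a monad presented by $\Sigma$ and $\mathcal E$ via a monad isomorphism $i\colon T'\Rightarrow K$, then there is a unique distributive law $\kappa$ of $\mathcal K$ over $\langle H,\epsilon\rangle$ such that $i\circ q\colon\lambda\Rightarrow\kappa$ is a morphism of distributive laws.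
   Context: Let $\mathcal C$ be a category and $\Sigma$ an endofunctor on $\mathcal C$. Let $\mathcal T=\langle T,\eta,\mu\rangle$ be the free monad over $\Sigma$. Let $\mathcal E=\langle E,l,r\rangle$ be $\mathcal T$-equations: $E$ an endofunctor, $l,r\colon E\Rightarrow T$ natural. Standing assumptions: 1. $\mathrm{Alg}(\mathcal T)$ has coequalizers. 2. The forgetful $U$ and $TU$ send regular epis to epis. 3. $EU$ sends regular epis to epis. The quotient monad $\mathcal T'=\langle T',\eta',\mu'\rangle$ is the monad induced by the left adjoint $X\mapsto\langle TX/\mathcal E,\mu_X/\mathcal E\rangle$ of the forgetful functor from the category of $\mathcal T$-algebras satisfying $\mathcal E$ (those with $\alpha\circ l_A=\alpha\circ r_A$) to $\mathcal C$. Here $\langle TX/\mathcal E,\mu_X/\mathcal E\rangle$ is the codomain of the coequalizer $s$ in $\mathrm{Alg}(\mathcal T)$ of $\mu_X\circ\mu_{TX}\circ Tl_{TX}$ and $\mu_X\circ\mu_{TX}\circ Tr_{TX}$. We set $q_X=Us_{\langle TX,\mu_X\rangle}\colon TX\to T'X$, a monad morphism. A monad $\mathcal K$ is presented by $\Sigma$ and $\mathcal E$ if there is a monad isomorphism $T'\Rightarrow K$. A copointed functor is a pair $\langle H,\epsilon\rangle$ with $H$ an endofunctor and $\epsilon\colon H\Rightarrow\mathrm{Id}$ natural. A distributive law of a monad $\langle K,\theta,\nu\rangle$ over $H$ is a natural $\kappa\colon KH\Rightarrow HK$ with $\kappa\circ\theta_H=H\theta$ and $\kappa\circ\nu_H=H\nu\circ\kappa_K\circ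 K\kappa$. It is a distributive law over the copointed functor $\langle H,\epsilon\rangle$ if moreover $\epsilon_K\circ\kappa=K\epsilon$. A morphism of distributive laws $\tau\colon\lambda\Rightarrow\kappa$ is a monad morphism $\tau$ with $\kappa\circ\tau_H=H\tau\circ\lambda$. *)

Set Implicit Arguments.
Unset Strict Implicit.

Record Category := {
  Ob :> Type;
  Hom : Ob -> Ob -> Type;
  idm : forall A : Ob, Hom A A;
  comp : forall A B D : Ob, Hom B D -> Hom A B -> Hom A D;
  comp_id_l : forall A B (f : Hom A B), comp (idm B) f = f;
  comp_id_r : forall A B (f : Hom A B), comp f (idm A) = f;
  comp_assoc : forall A B D E (h : Hom D E) (g : Hom B D) (f : Hom A B),
      comp h (comp g f) = comp (comp h g) f }.

Arguments Hom {c} _ _.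
Arguments idm {c} A.
Arguments comp {c A B D} _ _.

Notation "g ∘ f" := (comp g f) (at level 40, left associativity).

Record Endo (C : Category) := {
  fob :> C -> C;
  fmap : forall A B : C, Hom A B -> Hom (fob A) (fob B);
  fmap_id : forall A : C, fmap (idm A) = idm (fob A);
  fmap_comp : forall (A B D : C) (g : Hom B D) (f : Hom A B),
      fmap (g ∘ f) = fmap g ∘ fmap f }.

Arguments fmap {C} e {A B} _.

Unset Implicit Arguments.

Definition is_nat (C : Category) (F G : Endo C) (a : forall X : C, Hom (F X) (G X)) : Prop :=
  forall (X Y : C) (f : Hom X Y), fmap G f ∘ a X = a Y ∘ fmap F f.
Arguments is_nat {C} F G a.

Record Monad (C : Category) := {
  mF :> Endo C;
  unit : forall X : C, Hom X (mF X);
  mult : forall X : C, Hom (mF (mF X)) (mF X);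
  unit_nat : forall (X Y : C) (f : Hom X Y), fmap mF f ∘ unit X = unit Y ∘ f;
  mult_nat : forall (X Y : C) (f : Hom X Y),
      fmap mF f ∘ mult X = mult Y ∘ fmap mF (fmap mF f);
  mult_unit_l : forall X : C, mult X ∘ unit (mF X) = idm (mF X);
  mult_unit_r : forall X : C, mult X ∘ fmap mF (unit X) = idm (mF X);
  mult_assoc : forall X : C, mult X ∘ mult (mF X) = mult X ∘ fmap mF (mult X) }.

Arguments unit {C} m X.
Arguments mult {C} m X.

Definition is_epi (C : Category) (A B : C) (e : Hom A B) : Prop :=
  forall (Z : C) (u v : Hom B Z), u ∘ e = v ∘ e -> u = v.
Arguments is_epi {C A B} e.

Definition is_iso (C : Category) (A B : C) (f : Hom A B) : Prop :=
  exists g : Hom B A, g ∘ f = idm A /\ f ∘ g = idm B.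
Arguments is_iso {C A B} f.

(** * The free monad over an endofunctor [Sig]:
    each [T X] carries a Sig-algebra structure [tau X] making
    [(T X, tau X)] together with [unit T X] the free Sig-algebra on [X];
    the functor action and multiplication of [T] are Sig-algebra
    homomorphisms (hence are the ones induced by freeness). *)
Definition is_free_monad (C : Category) (Sig : Endo C) (T : Monad C) : Prop :=
  exists tau : forall X : C, Hom (Sig (T X)) (T X),
    (forall (X A : C) (a : Hom (Sig A) A) (f : Hom X A),
        exists! g : Hom (T X) A, g ∘ unit T X = f /\ g ∘ tau X = a ∘ fmap Sig g)
    /\ (forall (X Y : C) (f : Hom X Y), fmap T f ∘ tau X = tau Y ∘ fmap Sig (fmap T f))
    /\ (forall X : C, mult T X ∘ tau (T X) = tau X ∘ fmap Sig (mult T X)).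
Arguments is_free_monad {C} Sig T.

Definition is_alg (C : Category) (T : Monad C) (A : C) (a : Hom (T A) A) : Prop :=
  a ∘ unit T A = idm A /\ a ∘ mult T A = a ∘ fmap T a.
Arguments is_alg {C} T {A} a.

Definition is_alg_hom (C : Category) (T : Monad C) (A B : C)
  (a : Hom (T A) A) (b : Hom (T B) B) (h : Hom A B) : Prop :=
  h ∘ a = b ∘ fmap T h.
Arguments is_alg_hom {C} T {A B} a b h.

Definition is_alg_coeq (C : Category) (T : Monad C) (A B Q : C)
  (a : Hom (T A) A) (b : Hom (T B) B) (c : Hom (T Q) Q)
  (f g : Hom A B) (s : Hom B Q) : Prop :=
  is_alg T c /\ is_alg_hom T b c s /\ s ∘ f = s ∘ g /\
  forall (D : C) (d : Hom (T D) D) (h : Hom B D),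
    is_alg T d -> is_alg_hom T b d h -> h ∘ f = h ∘ g ->
    exists! k : Hom Q D, is_alg_hom T c d k /\ k ∘ s = h.
Arguments is_alg_coeq {C} T {A B Q} a b c f g s.

Definition alg_has_coequalizers (C : Category) (T : Monad C) : Prop :=
  forall (A B : C) (a : Hom (T A) A) (b : Hom (T B) B) (f g : Hom A B),
    is_alg T a -> is_alg T b -> is_alg_hom T a b f -> is_alg_hom T a b g ->
    exists (Q : C) (c : Hom (T Q) Q) (s : Hom B Q), is_alg_coeq T a b c f g s.
Arguments alg_has_coequalizers {C} T.

Definition is_alg_regular_epi (C : Category) (T : Monad C) (B Q : C)
  (b : Hom (T B) B) (c : Hom (T Q) Q) (s : Hom B Q) : Prop :=
  is_alg T b /\ is_alg T c /\ is_alg_hom T b c s /\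
  exists (A : C) (a : Hom (T A) A) (f g : Hom A B),
    is_alg T a /\ is_alg_hom T a b f /\ is_alg_hom T a b g /\ is_alg_coeq T a b c f g s.
Arguments is_alg_regular_epi {C} T {B Q} b c s.

(** [F ∘ U] sends regular epis of Alg(T) to epis of C
    ([F] = identity gives the condition on [U]). *)
Definition U_regepi_to_epi (C : Category) (T : Monad C) : Prop :=
  forall (B Q : C) (b : Hom (T B) B) (c : Hom (T Q) Q) (s : Hom B Q),
    is_alg_regular_epi T b c s -> is_epi s.
Arguments U_regepi_to_epi {C} T.

Definition FU_regepi_to_epi (C : Category) (T : Monad C) (F : Endo C) : Prop :=
  forall (B Q : C) (b : Hom (T B) B) (c : Hom (T Q) Q) (s : Hom B Q),
    is_alg_regular_epi T b c s -> is_epi (fmap F s).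
Arguments FU_regepi_to_epi {C} T F.

(** * The quotient monad T' = T/E with [q : T => T'].
    [T'] is the monad induced by the left adjoint
    [X |-> <TX/E, mu_X/E>] built from (some choice of) coequalizers
    [s = q_X] in Alg(T).  Concretely, for every [X]:
    - [q X : (TX, mult T X) -> (T'X, rho X)] is a coequalizer in Alg(T) of
      [mult T X ∘ mult T (T X) ∘ fmap T (l (T X))] and the same with [r],
      where [rho X = mult T' X ∘ q (T' X)] (the T-algebra structure of the
      free E-algebra, = [U] of the counit composed with [q]);
    - the unit of [T'] is the adjunction unit [q X ∘ unit T X];
    - the functor action of [T'] is the one induced on the quotients
      ([q] natural).
    These data determine [T'] (functor, unit, multiplication) uniquely from
    the chosen coequalizers, i.e. they say exactly that [T'] is the induced
    monad. *)
Definition is_quotient_monad (C : Category) (T : Monad C) (E : Endo C)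
  (l r : forall X : C, Hom (E X) (T X)) (T' : Monad C)
  (q : forall X : C, Hom (T X) (T' X)) : Prop :=
  (forall X : C,
      is_alg_coeq T (mult T (E (T X))) (mult T X) (mult T' X ∘ q (T' X))
        (mult T X ∘ mult T (T X) ∘ fmap T (l (T X)))
        (mult T X ∘ mult T (T X) ∘ fmap T (r (T X)))
        (q X))
  /\ (forall X : C, unit T' X = q X ∘ unit T X)
  /\ is_nat T T' q.
Arguments is_quotient_monad {C} T E l r T' q.

Definition is_copointed (C : Category) (H : Endo C) (eps : forall X : C, Hom (H X) X) : Prop :=
  forall (X Y : C) (f : Hom X Y), f ∘ eps X = eps Y ∘ fmap H f.
Arguments is_copointed {C} H eps.

Definition is_distr_law (C : Category) (K : Monad C) (H : Endo C)
  (k : forall X : C, Hom (K (H X)) (H (K X))) : Prop :=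
  (forall (X Y : C) (f : Hom X Y), fmap H (fmap K f) ∘ k X = k Y ∘ fmap K (fmap H f))
  /\ (forall X : C, k X ∘ unit K (H X) = fmap H (unit K X))
  /\ (forall X : C, k X ∘ mult K (H X) = fmap H (mult K X) ∘ k (K X) ∘ fmap K (k X)).
Arguments is_distr_law {C} K H k.

Definition is_distr_law_copointed (C : Category) (K : Monad C) (H : Endo C)
  (eps : forall X : C, Hom (H X) X) (k : forall X : C, Hom (K (H X)) (H (K X))) : Prop :=
  is_distr_law K H k /\ (forall X : C, eps (K X) ∘ k X = fmap K (eps X)).
Arguments is_distr_law_copointed {C} K H eps k.

Definition is_monad_morphism (C : Category) (S K : Monad C)
  (t : forall X : C, Hom (S X) (K X)) : Prop :=
  is_nat S K t
  /\ (forall X : C, t X ∘ unit S X = unit K X)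
  /\ (forall X : C, t X ∘ mult S X = mult K X ∘ t (K X) ∘ fmap S (t X)).
Arguments is_monad_morphism {C} S K t.

Definition is_monad_iso (C : Category) (S K : Monad C)
  (t : forall X : C, Hom (S X) (K X)) : Prop :=
  is_monad_morphism S K t /\ (forall X : C, is_iso (t X)).
Arguments is_monad_iso {C} S K t.

Definition is_distr_law_morphism (C : Category) (S K : Monad C) (H : Endo C)
  (lam : forall X : C, Hom (S (H X)) (H (S X)))
  (k : forall X : C, Hom (K (H X)) (H (K X)))
  (t : forall X : C, Hom (S X) (K X)) : Prop :=
  is_monad_morphism S K t /\ (forall X : C, k X ∘ t (H X) = fmap H (t X) ∘ lam X).
Arguments is_distr_law_morphism {C} S K H lam k t.

Definition preserves_eqs (C : Category) (T : Monad C) (E : Endo C)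
  (l r : forall X : C, Hom (E X) (T X)) (T' : Monad C)
  (q : forall X : C, Hom (T X) (T' X)) (H : Endo C)
  (lam : forall X : C, Hom (T (H X)) (H (T X))) : Prop :=
  forall X : C, fmap H (q X) ∘ lam X ∘ l (H X) = fmap H (q X) ∘ lam X ∘ r (H X).
Arguments preserves_eqs {C} T E l r T' q H lam.

From Stdlib Require Import FunctionalExtensionality IndefiniteDescription ChoiceFacts.

(* The components of [q] are regular epimorphisms in Alg(T), hence epimorphisms
   of C, and so are the [T q_X].  Therefore a family [lam'] with
   [lam' ∘ q_H = H q ∘ lam] is unique, and it automatically satisfies the axioms of
   a distributive law over the copointed functor: each axiom for [lam'], precomposed
   with the epis [q] or [q_T' ∘ T q], becomes the corresponding axiom for [lam].
   Such a [lam'_X] exists iff [H q_X ∘ lam_X], a T-algebra morphism from the free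
   algebra [T H X] to the algebra [H T' X] lifted along [lam], coequalizes the pair
   defining [q_{HX}]; by naturality of [l], [r] and the multiplication axiom of [lam]
   this is exactly preservation of the equations.  Part (b) transports [lam'] along
   the isomorphism [i]. *)

Lemma comp_eq_precomp {C : Category} {A B D B' : C}
  {a : Hom B D} {b : Hom A B} {c : Hom B' D} {d : Hom A B'} :
  a ∘ b = c ∘ d -> forall Z (x : Hom Z A), a ∘ (b ∘ x) = c ∘ (d ∘ x).
Proof. intros e Z x. rewrite !comp_assoc, e. reflexivity. Qed.

Lemma comp_id_precomp {C : Category} {A B : C} {a : Hom B A} {b : Hom A B} :
  a ∘ b = idm A -> forall Z (x : Hom Z A), a ∘ (b ∘ x) = x.
Proof. intros e Z x. rewrite comp_assoc, e, comp_id_l. reflexivity. Qed.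

Lemma fmap_comp_eq {C : Category} (F : Endo C) {A B D B' : C}
  {a : Hom B D} {b : Hom A B} {c : Hom B' D} {d : Hom A B'} :
  a ∘ b = c ∘ d -> fmap F a ∘ fmap F b = fmap F c ∘ fmap F d.
Proof. intros e. rewrite <- !fmap_comp, e. reflexivity. Qed.

(* Composites are kept right-associated; [comp_rewrite e] rewrites with an equation
   [a ∘ b = c ∘ d] (or [a ∘ b = idm]) inside such a composite. *)
Ltac comp_normalize :=
  repeat rewrite ?fmap_comp, ?fmap_id, ?comp_id_l, ?comp_id_r; repeat rewrite <- comp_assoc.
Ltac comp_rewrite e :=
  first [rewrite (comp_eq_precomp e) | rewrite (comp_id_precomp e) | rewrite e].
Ltac comp_rewrite_rev e := first [rewrite <- (comp_eq_precomp e) | rewrite <- e].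

Section EpisAndIsos.

Context {C : Category}.

Lemma epi_comp (A B D : C) (f : Hom A B) (g : Hom B D) :
  is_epi f -> is_epi g -> is_epi (g ∘ f).
Proof. intros hf hg Z u v e. apply hg, hf. rewrite <- !comp_assoc. exact e. Qed.

Lemma iso_epi (A B : C) (f : Hom A B) : is_iso f -> is_epi f.
Proof.
  intros [g [_ fg]] Z u v e.
  rewrite <- (comp_id_r u), <- (comp_id_r v), <- fg, !comp_assoc, e. reflexivity.
Qed.

Lemma fmap_iso (F : Endo C) (A B : C) (f : Hom A B) : is_iso f -> is_iso (fmap F f).
Proof.
  intros [g [gf fg]]. exists (fmap F g).
  rewrite <- !fmap_comp, gf, fg, !fmap_id. split; reflexivity.
Qed.

End EpisAndIsos.

Section DistributiveLawsAlongEpis.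

Context {C : Category}.
Variables (S K : Monad C) (H : Endo C) (t : forall X : C, Hom (S X) (K X)).
Variable lam : forall X : C, Hom (S (H X)) (H (S X)).

Lemma distr_law_morphism_unique (k1 k2 : forall X : C, Hom (K (H X)) (H (K X))) :
  (forall X, is_epi (t X)) ->
  (forall X, k1 X ∘ t (H X) = fmap H (t X) ∘ lam X) ->
  (forall X, k2 X ∘ t (H X) = fmap H (t X) ∘ lam X) ->
  k1 = k2.
Proof.
  intros epi_t sq1 sq2. apply functional_extensionality_dep. intros X.
  apply (epi_t (H X)). rewrite sq1, sq2. reflexivity.
Qed.

Lemma distr_law_copointed_of_epi_square (eps : forall X : C, Hom (H X) X)
    (kap : forall X : C, Hom (K (H X)) (H (K X))) :
  is_copointed H eps -> is_distr_law_copointed S H eps lam -> is_monad_morphism S K t ->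
  (forall X, is_epi (t X)) -> (forall X, is_epi (t (K X) ∘ fmap S (t X))) ->
  (forall X, kap X ∘ t (H X) = fmap H (t X) ∘ lam X) ->
  is_distr_law_copointed K H eps kap.
Proof.
  intros Heps [[Ln [Lu Lm]] Le] [Tn [Tu Tm]] epi_t epi_tt sq.
  assert (Tm' : forall X, t X ∘ mult S X = mult K X ∘ (t (K X) ∘ fmap S (t X)))
    by (intros; rewrite Tm; comp_normalize; reflexivity).
  assert (Lm' : forall X, lam X ∘ mult S (H X) = fmap H (mult S X) ∘ (lam (S X) ∘ fmap S (lam X)))
    by (intros; rewrite Lm; comp_normalize; reflexivity).
  split; [split; [|split]|].
  - intros X Y f. apply (epi_t (H X)). comp_normalize.
    comp_rewrite (sq X). comp_rewrite (fmap_comp_eq H (Tn _ _ f)). comp_rewrite (Ln X Y f).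
    comp_rewrite (Tn _ _ (fmap H f)). comp_rewrite (sq Y). comp_normalize. reflexivity.
  - intros X. rewrite <- Tu. comp_normalize.
    comp_rewrite (sq X). comp_rewrite (Lu X). rewrite <- fmap_comp, Tu. reflexivity.
  - intros X. apply (epi_tt (H X)). comp_normalize.
    rewrite <- Tm'. comp_rewrite (sq X). comp_rewrite (Lm' X).
    comp_rewrite (fmap_comp_eq H (Tm' X)). comp_normalize.
    comp_rewrite (Tn _ _ (kap X)). comp_rewrite (fmap_comp_eq S (sq X)).
    comp_rewrite (sq (K X)). comp_normalize. comp_rewrite (Ln _ _ (t X)). reflexivity.
  - intros X. apply (epi_t (H X)). comp_normalize.
    comp_rewrite (sq X). comp_rewrite_rev (Heps _ _ (t X)). comp_rewrite (Le X).
    symmetry. apply Tn.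
Qed.

End DistributiveLawsAlongEpis.

Section Algebras.

Context {C : Category}.
Variable T : Monad C.

Lemma mult_is_alg (X : C) : is_alg T (mult T X).
Proof. split; [apply mult_unit_l | apply mult_assoc]. Qed.

Lemma mult_mult_fmap_is_alg_hom (X Y : C) (k : Hom Y (T (T X))) :
  is_alg_hom T (mult T Y) (mult T X) (mult T X ∘ mult T (T X) ∘ fmap T k).
Proof.
  unfold is_alg_hom. comp_normalize.
  comp_rewrite (mult_nat C T _ _ k). comp_rewrite (mult_assoc C T X).
  comp_rewrite (mult_nat C T _ _ (mult T X)). comp_rewrite (mult_assoc C T X).
  comp_rewrite (fmap_comp_eq T (mult_assoc C T X)). reflexivity.
Qed.

Lemma alg_hom_comp_mult_mult_fmap (Y D Z : C) (d : Hom (T D) D) (h : Hom (T Y) D)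
    (m : Hom Z (T (T Y))) :
  is_alg T d -> is_alg_hom T (mult T Y) d h ->
  h ∘ (mult T Y ∘ mult T (T Y) ∘ fmap T m) = d ∘ fmap T (h ∘ mult T Y ∘ m).
Proof.
  intros [_ d_mult] h_hom. unfold is_alg_hom in h_hom. comp_normalize.
  comp_rewrite h_hom. comp_rewrite (mult_nat C T _ _ h). comp_rewrite d_mult.
  comp_rewrite (fmap_comp_eq T h_hom). reflexivity.
Qed.

Lemma distr_law_lift_alg (H : Endo C) (lam : forall X : C, Hom (T (H X)) (H (T X)))
    (A : C) (a : Hom (T A) A) :
  is_distr_law T H lam -> is_alg T a -> is_alg T (fmap H a ∘ lam A).
Proof.
  intros [Ln [Lu Lm]] [a_unit a_mult]. split.
  - comp_normalize. comp_rewrite (Lu A). rewrite <- fmap_comp, a_unit, fmap_id. reflexivity.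
  - comp_normalize. rewrite Lm. comp_normalize. comp_rewrite (fmap_comp_eq H a_mult).
    comp_normalize. comp_rewrite (Ln _ _ a). reflexivity.
Qed.

End Algebras.

Lemma monad_morphism_comp {C : Category} (S K L : Monad C)
    (t : forall X : C, Hom (S X) (K X)) (u : forall X : C, Hom (K X) (L X)) :
  is_monad_morphism S K t -> is_monad_morphism K L u ->
  is_monad_morphism S L (fun X => u X ∘ t X).
Proof.
  intros [Tn [Tu Tm]] [Un [Uu Um]]. split; [|split].
  - intros X Y f. comp_normalize. comp_rewrite (Un _ _ f). comp_rewrite (Tn _ _ f). reflexivity.
  - intros X. comp_normalize. comp_rewrite (Tu X). exact (Uu X).
  - intros X. comp_normalize. rewrite Tm. comp_normalize. comp_rewrite (Um X).
    comp_normalize. comp_rewrite (Tn _ _ (u X)). reflexivity.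
Qed.

Section QuotientMonad.

Context {C : Category}.
Variables (T : Monad C) (E : Endo C) (l r : forall X : C, Hom (E X) (T X)).
Variables (T' : Monad C) (q : forall X : C, Hom (T X) (T' X)).
Hypotheses (Hl : is_nat E T l) (Hr : is_nat E T r).
Hypothesis Hq : is_quotient_monad T E l r T' q.

Lemma quotient_regular_epi (X : C) :
  is_alg_regular_epi T (mult T X) (mult T' X ∘ q (T' X)) (q X).
Proof.
  destruct (proj1 Hq X) as [c_alg [q_hom _]].
  split; [apply mult_is_alg | split; [exact c_alg | split; [exact q_hom |]]].
  do 4 eexists. split; [apply mult_is_alg | split; [apply mult_mult_fmap_is_alg_hom |]].
  split; [apply mult_mult_fmap_is_alg_hom | exact (proj1 Hq X)].
Qed.

Lemma quotient_monad_morphism : is_monad_morphism T T' q.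
Proof.
  destruct Hq as [coeq [unit_q nat_q]]. split; [exact nat_q | split].
  - intros X. symmetry. apply unit_q.
  - intros X. exact (proj1 (proj2 (coeq X))).
Qed.

Hypotheses (HU : U_regepi_to_epi T) (HTU : FU_regepi_to_epi T T).

Lemma quotient_epi (X : C) : is_epi (q X).
Proof. exact (HU _ _ _ _ _ (quotient_regular_epi X)). Qed.

Lemma quotient_fmap_epi (X : C) : is_epi (fmap T (q X)).
Proof. exact (HTU _ _ _ _ _ (quotient_regular_epi X)). Qed.

(* Precomposing with [unit T (E (T X)) ∘ fmap E (unit T X)] recovers [l X] and [r X]
   from the parallel pair that [q X] coequalizes. *)
Lemma quotient_coequalizes (X : C) : q X ∘ l X = q X ∘ r X.
Proof.
  destruct (proj1 Hq X) as [_ [_ [coeq_eq _]]].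
  assert (recover : forall k : forall Y, Hom (E Y) (T Y), is_nat E T k ->
     (mult T X ∘ mult T (T X) ∘ fmap T (k (T X))) ∘ (unit T (E (T X)) ∘ fmap E (unit T X)) = k X).
  { intros k Hk. comp_normalize. comp_rewrite (unit_nat C T _ _ (k (T X))).
    comp_rewrite (mult_unit_l C T (T X)). comp_rewrite_rev (Hk _ _ (unit T X)).
    comp_rewrite (mult_unit_r C T X). reflexivity. }
  rewrite <- (recover l Hl), <- (recover r Hr), comp_assoc, coeq_eq, <- comp_assoc.
  reflexivity.
Qed.

Variables (H : Endo C) (eps : forall X : C, Hom (H X) X).
Variable lam : forall X : C, Hom (T (H X)) (H (T X)).

Lemma preserves_eqs_of_square (lam' : forall X : C, Hom (T' (H X)) (H (T' X))) :
  (forall X, lam' X ∘ q (H X) = fmap H (q X) ∘ lam X) ->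
  preserves_eqs T E l r T' q H lam.
Proof.
  intros sq X. rewrite <- sq, <- !comp_assoc, quotient_coequalizes. reflexivity.
Qed.

Lemma preserves_eqs_factor_through_quotient :
  is_distr_law T H lam -> preserves_eqs T E l r T' q H lam ->
  forall X, exists k : Hom (T' (H X)) (H (T' X)), k ∘ q (H X) = fmap H (q X) ∘ lam X.
Proof.
  intros Hlam Hpres X.
  pose proof Hlam as [Ln [_ Lm]].
  pose proof quotient_monad_morphism as [Qn [_ Qm]].
  destruct (proj1 Hq (H X)) as [_ [_ [_ coeq_univ]]].
  set (d := fmap H (mult T' X ∘ q (T' X)) ∘ lam (T' X)).
  assert (d_alg : is_alg T d)
    by (apply distr_law_lift_alg; [exact Hlam | exact (proj1 (proj1 Hq X))]).
  assert (Qm' : forall Y, q Y ∘ mult T Y = mult T' Y ∘ (q (T' Y) ∘ fmap T (q Y)))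
    by (intros; rewrite Qm; comp_normalize; reflexivity).
  assert (Lm' : forall Y, lam Y ∘ mult T (H Y) = fmap H (mult T Y) ∘ (lam (T Y) ∘ fmap T (lam Y)))
    by (intros; rewrite Lm; comp_normalize; reflexivity).
  assert (h_hom : is_alg_hom T (mult T (H X)) d (fmap H (q X) ∘ lam X)).
  { unfold is_alg_hom, d. comp_normalize. comp_rewrite (Lm' X).
    comp_rewrite (fmap_comp_eq H (Qm' X)). comp_normalize. comp_rewrite (Ln _ _ (q X)).
    reflexivity. }
  assert (q_mult : q X ∘ mult T X = (mult T' X ∘ fmap T' (q X)) ∘ q (T X)).
  { rewrite Qm'. comp_normalize. rewrite (Qn _ _ (q X)). reflexivity. }
  assert (pres : forall Z (x : Hom Z (E (H (T X)))),
             fmap H (q (T X)) ∘ (lam (T X) ∘ (l (H (T X)) ∘ x))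
           = fmap H (q (T X)) ∘ (lam (T X) ∘ (r (H (T X)) ∘ x)))
    by (intros; rewrite !comp_assoc, Hpres; reflexivity).
  assert (h_coeq : fmap H (q X) ∘ lam X ∘ mult T (H X) ∘ l (T (H X))
                 = fmap H (q X) ∘ lam X ∘ mult T (H X) ∘ r (T (H X))).
  { comp_normalize. comp_rewrite (Lm' X). comp_rewrite (Lm' X). comp_normalize.
    comp_rewrite (Hl _ _ (lam X)). comp_rewrite (Hr _ _ (lam X)).
    comp_rewrite (fmap_comp_eq H q_mult). comp_rewrite (fmap_comp_eq H q_mult). comp_normalize.
    rewrite pres. reflexivity. }
  edestruct (coeq_univ (H (T' X)) d (fmap H (q X) ∘ lam X) d_alg h_hom) as [k [[_ k_sq] _]].
  - rewrite !(alg_hom_comp_mult_mult_fmap T _ _ _ d _ _ d_alg h_hom), h_coeq. reflexivity.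
  - exists k. exact k_sq.
Qed.

Hypotheses (Heps : is_copointed H eps) (Hlam : is_distr_law_copointed T H eps lam).

Lemma quotient_distr_law_exists :
  preserves_eqs T E l r T' q H lam ->
  exists lam' : forall X : C, Hom (T' (H X)) (H (T' X)),
    is_distr_law_copointed T' H eps lam' /\ is_distr_law_morphism T T' H lam lam' q.
Proof.
  intros Hpres.
  destruct (non_dep_dep_functional_choice functional_choice _ _
              (preserves_eqs_factor_through_quotient (proj1 Hlam) Hpres)) as [lam' sq].
  exists lam'. split; [| split; [exact quotient_monad_morphism | exact sq]].
  apply (distr_law_copointed_of_epi_square T T' H q lam eps lam' Heps Hlam
           quotient_monad_morphism quotient_epi); [| exact sq].
  intros X. apply epi_comp; [apply quotient_fmap_epi | apply quotient_epi].
Qed.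

Variables (K : Monad C) (i : forall X : C, Hom (T' X) (K X)).
Hypothesis Hi : is_monad_iso T' K i.

Lemma iso_comp_quotient_epi (X : C) : is_epi (i X ∘ q X).
Proof. apply epi_comp; [apply quotient_epi | apply iso_epi, (proj2 Hi)]. Qed.

Lemma presented_distr_law_exists :
  preserves_eqs T E l r T' q H lam ->
  exists kappa : forall X : C, Hom (K (H X)) (H (K X)),
    is_distr_law_copointed K H eps kappa
    /\ is_distr_law_morphism T K H lam kappa (fun X => i X ∘ q X).
Proof.
  intros Hpres. destruct Hi as [i_mm i_iso].
  destruct (quotient_distr_law_exists Hpres) as [lam' [_ [_ sq]]].
  destruct (non_dep_dep_functional_choice functional_choice _ _ i_iso) as [j ji].
  set (kappa := fun X => fmap H (i X) ∘ lam' X ∘ j (H X)).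
  assert (kappa_sq : forall X, kappa X ∘ (i (H X) ∘ q (H X)) = fmap H (i X ∘ q X) ∘ lam X).
  { intros X. unfold kappa. comp_normalize.
    comp_rewrite (proj1 (ji (H X))). comp_rewrite (sq X). reflexivity. }
  assert (iq_mm : is_monad_morphism T K (fun X => i X ∘ q X))
    by exact (monad_morphism_comp T T' K q i quotient_monad_morphism i_mm).
  exists kappa. split; [| split; [exact iq_mm | exact kappa_sq]].
  apply (distr_law_copointed_of_epi_square T K H _ lam eps kappa Heps Hlam iq_mm
           iso_comp_quotient_epi); [| exact kappa_sq].
  intros X. rewrite fmap_comp. repeat apply epi_comp.
  - apply quotient_fmap_epi.
  - apply iso_epi, fmap_iso, i_iso.
  - apply quotient_epi.
  - apply iso_epi, i_iso.
Qed.

End QuotientMonad.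

(* [Sig], [HTfree], [Hcoeq] and [HEU] only guarantee that [T'] exists; the
   argument uses [T'] solely through the coequalizer property recorded in [Hq]. *)
Theorem proposition4p10
  (C : Category) (Sig : Endo C) (T : Monad C) (HTfree : is_free_monad Sig T)
  (E : Endo C) (l r : forall X : C, Hom (E X) (T X))
  (Hl : is_nat E T l) (Hr : is_nat E T r)
  (Hcoeq : alg_has_coequalizers T)
  (HU : U_regepi_to_epi T) (HTU : FU_regepi_to_epi T T)
  (HEU : FU_regepi_to_epi T E)
  (T' : Monad C) (q : forall X : C, Hom (T X) (T' X))
  (Hq : is_quotient_monad T E l r T' q)
  (H : Endo C) (eps : forall X : C, Hom (H X) X) (Heps : is_copointed H eps)
  (lam : forall X : C, Hom (T (H X)) (H (T X)))
  (Hlam : is_distr_law_copointed T H eps lam) :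
  (* (a) *)
  ((preserves_eqs T E l r T' q H lam <->
      exists lam' : forall X : C, Hom (T' (H X)) (H (T' X)),
        is_distr_law_copointed T' H eps lam' /\ is_distr_law_morphism T T' H lam lam' q)
   /\ (forall lam1 lam2 : forall X : C, Hom (T' (H X)) (H (T' X)),
        is_distr_law_copointed T' H eps lam1 -> is_distr_law_morphism T T' H lam lam1 q ->
        is_distr_law_copointed T' H eps lam2 -> is_distr_law_morphism T T' H lam lam2 q ->
        lam1 = lam2))
  /\
  (* (b) *)
  (preserves_eqs T E l r T' q H lam ->
   forall (K : Monad C) (i : forall X : C, Hom (T' X) (K X)),
     is_monad_iso T' K i ->
     exists! kappa : forall X : C, Hom (K (H X)) (H (K X)),
       is_distr_law_copointed K H eps kappa
       /\ is_distr_law_morphism T K H lam kappa (fun X => i X ∘ q X)).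
Proof.
  split; [split; [split |] |].
  - exact (quotient_distr_law_exists T E l r T' q Hl Hr Hq HU HTU H eps lam Heps Hlam).
  - intros [lam' [_ [_ sq]]]. exact (preserves_eqs_of_square T E l r T' q Hl Hr Hq H lam lam' sq).
  - intros lam1 lam2 _ [_ sq1] _ [_ sq2].
    exact (distr_law_morphism_unique T T' H q lam lam1 lam2 (quotient_epi T E l r T' q Hq HU) sq1 sq2).
  - intros Hpres K i Hi.
    destruct (presented_distr_law_exists T E l r T' q Hl Hr Hq HU HTU H eps lam Heps Hlam K i Hi Hpres)
      as [kappa [kappa_law [kappa_mm kappa_sq]]].
    exists kappa. split; [exact (conj kappa_law (conj kappa_mm kappa_sq)) |].
    intros kappa2 [_ [_ sq2]].
    exact (distr_law_morphism_unique T K H _ lam kappa kappa2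
             (iso_comp_quotient_epi T E l r T' q Hq HU K i Hi) kappa_sq sq2).
Qed.
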